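(* Let $d\ge0$ and $n>d$ be integers and let $\gamma=(\gamma_1,\dots,\gamma_l)$, $l\ge1$, be a partition with positive parts (i.e. $\gamma\neq(0)$). Enumerate $2^{\{1,\dots,l\}}=\{I_1,\dots,I_{2^l}\}$ with $I_1=\emptyset$. Then $$\lambda_{n,d}(\gamma)=\frac{1}{\prod_{k=1}^{d}m_k(\gamma)!}\sum_{\nu\in N(n,d;\gamma)}\frac{n!}{\nu(I_1)!\,\nu(I_2)!\cdots\nu(I_{2^l})!} =\frac{1}{\prod_{k=1}^{d}m_k(\gamma)!}\sum_{\nu\in N(n,d;\gamma)}\frac{(\nu(I_2)+\cdots+\nu(I_{2^l}))!}{\nu(I_2)!\cdots\nu(I_{2^l})!}\binom{n}{\nu(I_2)+\cdots+\nu(I_{2^l})}.$$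
   Context: For a finite set $X$ let $\operatorname{codim}_d(X)=d+1-|X|$. For a finite collection $\{T_1,\dots,T_l\}$ of pairwise distinct finite sets put $\rho_d(\{T_1,\dots,T_l\})=\sum_{i=1}^l\operatorname{codim}_d(T_i)$ (with $\rho_d(\emptyset)=0$) and $D_d(\{T_1,\dots,T_l\})=\operatorname{codim}_d(T_1\cap\cdots\cap T_l)-\rho_d(\{T_1,\dots,T_l\})$. For integers $d\ge0$, $n>d$, $L(n,d)$ is the set of all collections $T$ of subsets of $\{1,\dots,n\}$ such that (i) $D_d(T')>0$ for every $T'\subset T$ with $|T'|>1$, and (ii) $0\le|T_i|\le d$ for every $T_i\in T$. A partition is a weakly decreasing sequence of nonnegative integers. The type of $T=\{T_1,\dots,T_l\}\in L(n,d)$, listed so that $|T_1|\le\cdots\le|T_l|$, is $\gamma_d(T)=(\operatorname{codim}_d(T_1),\dots,\operatorname{codim}_d(T_l))$ (and $\gamma_d(\emptyset)=(0)$). $\lambda_{n,d}(\gamma)$ is the number of $T\in L(n,d)$ with $\gamma_d(T)=\gamma$. $m_k(\gamma)=|\{i:\gamma_i=k\}|$. $N(n,d;\gamma)$ is the set of maps $\nu:2^{\{1,\dots,l\}}\to\mathbb{Z}_{\ge0}$ such that: (1) $\sum_{I:\,i\in I}\nu(I)=d+1-\gamma_i$ for all $i=1,\dots,l$; (2) $\sum_{I':\,I\subset I'}\nu(I')<d+1-\sum_{i\in I}\gamma_i$ for all $I\subset\{1,\dots,l\}$ with $|I|\ge2$; (3) $\sum_{I\in 2^{\{1,\dots,l\}}}\nu(I)=n$.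 *)

From HB Require Import structures.
From mathcomp Require Import all_boot all_order all_algebra.
Set Implicit Arguments. Unset Strict Implicit. Unset Printing Implicit Defensive.
Import Order.TTheory GRing.Theory Num.Theory.

(* Ground set {1,...,n} is modelled by 'I_n. *)

Definition codim (d : nat) {T : finType} (X : {set T}) : int :=
  (d.+1)%:Z - (#|X|)%:Z.

Definition rho (d : nat) {T : finType} (C : {set {set T}}) : int :=
  (\sum_(X in C) codim d X)%R.

Definition Dd (d : nat) {T : finType} (C : {set {set T}}) : int :=
  (codim d (\bigcap_(X in C) X) - rho d C)%R.

Definition inL (n d : nat) (C : {set {set 'I_n}}) : bool :=
  [forall C' : {set {set 'I_n}}, (C' \subset C) && (1 < #|C'|) ==> (0 < Dd d C')%R]
  && [forall X : {set 'I_n}, (X \in C) ==> (#|X| <= d)].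

(* Type gamma_d(T): the codims d+1-|T_i| listed with |T_i| increasing,
   i.e. sorted in weakly decreasing order; gamma_d(empty) = (0).
   (For T in L(n,d) all |T_i| <= d, so the nat subtraction is exact.) *)
Definition gtype (d : nat) {T : finType} (C : {set {set T}}) : seq nat :=
  if C == set0 then [:: 0]
  else sort geq [seq d.+1 - #|X| | X : {set T} <- enum C].

Definition lambda (n d : nat) (g : seq nat) : nat :=
  #|[set C : {set {set 'I_n}} | @inL n d C && (gtype d C == g)]|.

Definition mult (k : nat) (g : seq nat) : nat := count_mem k g.

(* nu in N(n,d;gamma), for nu : 2^{1..l} -> Z_{>=0}, with l = size g
   (index set {1..l} modelled by 'I_(size g)). *)
Definition inN (n d : nat) (g : seq nat)
    (nu : {set 'I_(size g)} -> nat) : bool :=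
  [forall i : 'I_(size g),
      ((\sum_(I : {set 'I_(size g)} | i \in I) nu I)%:Z
        == (d.+1)%:Z - (nth 0 g i)%:Z)%R]
  && [forall I : {set 'I_(size g)}, (1 < #|I|) ==>
      ((\sum_(I' : {set 'I_(size g)} | I \subset I') nu I')%:Z
        < (d.+1)%:Z - (\sum_(i in I) nth 0 g i)%:Z)%R]
  && (\sum_(I : {set 'I_(size g)}) nu I == n).

From HB Require Import structures.
From mathcomp Require Import all_boot all_order all_algebra.
From mathcomp Require Import fingroup perm zify ring.
Import Order.TTheory GRing.Theory Num.Theory.
Set Implicit Arguments. Unset Strict Implicit. Unset Printing Implicit Defensive.

(* A collection of type [g] in L(n,d) is the image of an injective labelling
   [f : 'I_l -> {set 'I_n}] with [#|f i| = d + 1 - g_i]; two labellings have the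
   same image iff they differ by a permutation of labels preserving [g], and
   there are [prod_(k <= d) m_k(g)!] of those (a part [d + 1] labels the empty
   set, so it occurs at most once).  Transposing [f] into the incidence map
   [x |-> {i | x \in f i}] turns the defining conditions of L(n,d) into those
   of N(n,d;g) for [nu(I)] = number of points with incidence set [I], and the
   incidence maps with fibre sizes [nu] are counted by the multinomial
   coefficient [n! / prod_I nu(I)!]. *)

Lemma card_fibreD1 (T : finType) (U : eqType) (A : {set T}) a (h : T -> U) u :
  a \in A ->
  #|[set x in A | h x == u]| = (h a == u) + #|[set x in A :\ a | h x == u]|.
Proof.
move=> aA; rewrite (cardsD1 a) inE aA /=; congr (_ + _).
by apply: eq_card => x; rewrite !inE andbA.
Qed.

Section FibreCount.
Variables (D S : finType) (s0 : S).

(* The support [A] (outside of which [h] is [s0]) is what the induction of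
   [card_has_fibres] shrinks. *)
Definition has_fibres (A : {set D}) (nu : S -> nat) (h : {ffun D -> S}) :=
  [forall x in ~: A, h x == s0] && [forall s, #|[set x in A | h x == s]| == nu s].

Definition fupd (h : {ffun D -> S}) a s : {ffun D -> S} :=
  [ffun x => if x == a then s else h x].

Definition decr (nu : S -> nat) s t := if t == s then (nu s).-1 else nu t.

Lemma fupd_eq (h : {ffun D -> S}) a v : h a = v -> fupd h a v = h.
Proof. by move=> <-; apply/ffunP => x; rewrite ffunE; case: (x =P a) => [->|]. Qed.

Lemma fupd2 h a v w : fupd (fupd h a v) a w = fupd h a w.
Proof. by apply/ffunP => x; rewrite !ffunE; case: (x == a). Qed.

Lemma card_fibre_fupd (A : {set D}) h a s t :
  #|[set x in A :\ a | fupd h a s x == t]| = #|[set x in A :\ a | h x == t]|.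
Proof.
by apply: eq_card => x; rewrite !inE ffunE; case: (x =P a) => [->|]; rewrite ?eqxx.
Qed.

Lemma has_fibres_fupd (A : {set D}) nu a s h : a \in A -> 0 < nu s ->
  has_fibres A nu (fupd h a s) = has_fibres (A :\ a) (decr nu s) (fupd h a s0).
Proof.
move=> aA nus; congr andb.
  apply: eq_forallb => x; rewrite !inE !ffunE negb_and negbK.
  by case: (x =P a) => [->|_]; rewrite ?aA ?eqxx.
apply: eq_forallb => t; rewrite (card_fibreD1 _ _ aA) !card_fibre_fupd ffunE eqxx /decr.
rewrite [t == s]eq_sym; case: (s =P t) => [<-|_] //=.
by apply/eqP/eqP; lia.
Qed.

Lemma card_has_fibres_at (A : {set D}) nu a s : a \in A -> 0 < nu s ->
  #|[set h | has_fibres A nu h & h a == s]| = #|[set h | has_fibres (A :\ a) (decr nu s) h]|.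
Proof.
move=> aA nus.
have out_a (h : {ffun D -> S}) : has_fibres (A :\ a) (decr nu s) h -> h a = s0.
  by case/andP=> /forall_inP/(_ a) + _; rewrite !inE eqxx => /(_ isT)/eqP.
rewrite -[RHS](card_in_imset (f := fun h => fupd h a s)); last first.
  move=> h1 h2 /[!inE] /out_a h1a /out_a h2a.
  by move/(congr1 (fun h => fupd h a s0)); rewrite !fupd2 !fupd_eq.
apply: eq_card => h; rewrite inE; apply/andP/imsetP => [[hA /eqP ha]|[h' /[!inE] h'A ->]].
  exists (fupd h a s0); last by rewrite fupd2 fupd_eq.
  by rewrite inE -has_fibres_fupd // fupd_eq.
split; last by rewrite ffunE eqxx.
by rewrite has_fibres_fupd // fupd_eq // out_a.
Qed.

Lemma prod_fact_decr (nu : S -> nat) s : 0 < nu s ->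
  \prod_t (nu t)`! = nu s * \prod_t (decr nu s t)`!.
Proof.
move=> nus; rewrite (bigD1 s) //= [in RHS](bigD1 s) //= /decr eqxx mulnA.
rewrite -{1}(prednK nus) factS prednK //; congr (_ * _).
by apply: eq_bigr => t /negbTE ->.
Qed.

Lemma sum_decr (nu : S -> nat) s : 0 < nu s -> \sum_t decr nu s t = (\sum_t nu t).-1.
Proof.
move=> nus; rewrite (bigD1 s) //= [in RHS](bigD1 s) //= /decr eqxx.
rewrite (eq_bigr nu) => [|t /negbTE -> //]; lia.
Qed.

Lemma card_has_fibres (A : {set D}) (nu : S -> nat) : \sum_s nu s = #|A| ->
  #|[set h | has_fibres A nu h]| * \prod_s (nu s)`! = #|A|`!.
Proof.
move cardA: #|A| => k; elim: k A nu cardA => [|k IH] A nu cardA sum_nu.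
  have A0 : A = set0 by apply/cards0_eq.
  have nu0 s : nu s = 0 by move/eqP: sum_nu; rewrite sum_nat_eq0 => /forallP/(_ s)/eqP.
  rewrite big1 ?muln1 => [|s _]; last by rewrite nu0.
  rewrite (@eq_card1 _ [ffun=> s0]) // => h; rewrite !inE /has_fibres A0.
  apply/andP/eqP => [[/forall_inP h0 _]|->].
    by apply/ffunP => x; rewrite ffunE; apply/eqP; apply: h0; rewrite !inE.
  split; first by apply/forall_inP => x; rewrite ffunE.
  by apply/forallP => s; rewrite nu0 cards_eq0; apply/eqP/setP => x; rewrite !inE.
have [a aA] : exists a, a \in A by apply/set0Pn; rewrite -card_gt0 cardA.
have cardAa : #|A :\ a| = k by move: cardA; rewrite (cardsD1 a) aA add1n => -[].
have -> : #|[set h | has_fibres A nu h]| = \sum_s #|[set h | has_fibres A nu h & h a == s]|.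
  rewrite -sum1_card (partition_big (fun h : {ffun D -> S} => h a) xpredT) //=.
  by apply: eq_bigr => s _; rewrite -sum1_card; apply: eq_bigl => h; rewrite !inE.
rewrite big_distrl (eq_bigr (fun s => nu s * k`!)) => [|s _].
  by rewrite -big_distrl /= sum_nu factS.
have [nus0|nus] := posnP (nu s).
  rewrite nus0 mul0n (_ : #|_| = 0) ?mul0n //; apply: eq_card0 => h; rewrite !inE.
  apply/negP => /andP[/andP[_ /forallP/(_ s)]].
  by rewrite nus0 (card_fibreD1 _ _ aA) => /eqP + /eqP ha; rewrite ha eqxx.
rewrite /= card_has_fibres_at // (prod_fact_decr nus) mulnCA IH //.
by rewrite (sum_decr nus) sum_nu.
Qed.

End FibreCount.

Section ColourPermCount.
Variables (L K : finType) (c : L -> K).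

Definition colour_perm_on (A : {set L}) (s : {perm L}) :=
  perm_on A s && [forall i, c (s i) == c i].

Lemma colour_tperm a b y : c a = c b -> c (tperm a b y) = c y.
Proof. by move=> cab; case: tpermP => [->|->|]. Qed.

Lemma colour_perm_on_image (A : {set L}) s a :
  colour_perm_on A s -> a \in A -> (s a \in A) && (c (s a) == c a).
Proof. by case/andP=> sA /forallP cs aA; rewrite (perm_closed _ sA) aA cs. Qed.

Lemma card_colour_perm_at (A : {set L}) a b : a \in A -> b \in A -> c b = c a ->
  #|[set s | colour_perm_on A s & s a == b]| = #|[set s | colour_perm_on (A :\ a) s]|.
Proof.
move=> aA bA cba.
rewrite -[RHS](card_imset _ (mulIg (tperm a b))).
apply: eq_card => s; rewrite inE; apply/andP/imsetP.
  move=> [/andP[sA /forallP cs] /eqP sab].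
  exists (s * tperm a b)%g; last by apply/permP => x; rewrite !permM tpermK.
  rewrite inE; apply/andP; split; last first.
    by apply/forallP => x; rewrite permM colour_tperm ?cs ?cba.
  apply/subsetP => x; rewrite inE permM => nx.
  have xa : x != a by apply: contraNneq nx => ->; rewrite sab tpermR.
  rewrite !inE xa /=; apply: contraNT nx => xnA.
  rewrite (out_perm sA xnA) tpermD //; first by rewrite eq_sym.
  by apply: contraNneq xnA => <-.
move=> [t /[!inE] /andP[tA /forallP ct] ->].
have ta : t a = a by apply: out_perm tA _; rewrite !inE eqxx.
split; last by rewrite permM ta tpermL.
apply/andP; split.
  apply: perm_onM; first exact: subset_trans tA (subsetDl _ _).
  by apply: subset_trans (tperm_on a b) _; apply/subsetP => x /set2P[] ->.
by apply/forallP => x; rewrite permM colour_tperm ?ct.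
Qed.

Lemma card_colour_perm_on (A : {set L}) :
  #|[set s | colour_perm_on A s]| = \prod_k (#|[set i in A | c i == k]|)`!.
Proof.
move cardA: #|A| => n; elim: n A cardA => [|n IH] A cardA.
  have A0 : A = set0 by apply/cards0_eq.
  rewrite big1 => [|k _]; last by rewrite A0 (_ : [set i in set0 | _] = set0) ?cards0 //;
    apply/setP => i; rewrite !inE.
  rewrite (@eq_card1 _ 1%g) // => s; rewrite !inE /colour_perm_on A0.
  apply/andP/eqP => [[sA _]|->]; first by apply: perm_on_id sA _; rewrite cards0.
  by split; [apply: perm_on1 | apply/forallP => i; rewrite perm1].
have [a aA] : exists a, a \in A by apply/set0Pn; rewrite -card_gt0 cardA.
have cardAa : #|A :\ a| = n by move: cardA; rewrite (cardsD1 a) aA add1n => -[].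
have -> : #|[set s | colour_perm_on A s]| = \sum_b #|[set s | colour_perm_on A s & s a == b]|.
  rewrite -sum1_card (partition_big (fun s : {perm L} => s a) xpredT) //=.
  by apply: eq_bigr => b _; rewrite -sum1_card; apply: eq_bigl => s; rewrite !inE.
rewrite (eq_bigr (fun b => ((b \in A) && (c b == c a)) * #|[set s | colour_perm_on (A :\ a) s]|)).
  rewrite -big_distrl /= IH //.
  have -> : \sum_b ((b \in A) && (c b == c a)) = #|[set i in A | c i == c a]|.
    by rewrite -sum1_card [RHS]big_mkcond; apply: eq_bigr => b _; rewrite inE; case: (_ && _).
  rewrite [RHS](bigD1 (c a)) //= [X in _ * X](bigD1 (c a)) //= mulnA.
  congr (_ * _); first by rewrite (card_fibreD1 _ _ aA) eqxx add1n factS.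
  by apply: eq_bigr => k ka; rewrite (card_fibreD1 _ _ aA) eq_sym (negbTE ka).
move=> b _; have [/andP[bA /eqP cba]|nb] := boolP ((b \in A) && (c b == c a)).
  by rewrite mul1n card_colour_perm_at.
rewrite mul0n; apply: eq_card0 => s; rewrite !inE; apply/negP => /andP[sA /eqP sab].
by move: nb; rewrite -sab colour_perm_on_image.
Qed.
End ColourPermCount.

Lemma eqz_subn_addn (a b c : nat) : (a%:Z == b%:Z - c%:Z)%R = (a + c == b).
Proof. by apply/eqP/eqP; lia. Qed.

Lemma ltz_subn_addn (a b c : nat) : (a%:Z < b%:Z - c%:Z)%R = (a + c < b).
Proof. by apply/idP/idP; lia. Qed.

Lemma gtz0_subn_addn (a b c : nat) : (0 < b%:Z - a%:Z - c%:Z)%R = (a + c < b).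
Proof. by apply/idP/idP; lia. Qed.

Lemma geq_total : total geq. Proof. by move=> a b; rewrite /= leq_total. Qed.
Lemma geq_trans : transitive geq. Proof. by move=> a b c /= ba cb; apply: leq_trans cb ba. Qed.
Lemma geq_anti : antisymmetric geq. Proof. by move=> a b /andP[ba ab]; apply/anti_leq/andP. Qed.

Lemma map_nth_ord (g : seq nat) : [seq nth 0 g i | i : 'I_(size g) <- enum 'I_(size g)] = g.
Proof. by rewrite (map_comp (nth 0 g) val) val_enum_ord -/(mkseq _ _) mkseq_nth. Qed.

Lemma card_nth_eq (g : seq nat) k : #|[set i : 'I_(size g) | nth 0 g i == k]| = count_mem k g.
Proof.
have := congr1 (count (pred1 k)) (map_nth_ord g).
rewrite count_map enumT => <-; rewrite cardE /enum_mem size_filter.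
by apply: eq_count => i; rewrite !inE.
Qed.

Section Labellings.
Variables (n d : nat) (g : seq nat).
Hypotheses (g_pos : all (fun x => 0 < x) g) (g_sorted : sorted geq g) (g_nil : 0 < size g).
Local Notation L := 'I_(size g).

Lemma nth_g_gt0 (i : L) : 0 < nth 0 g i.
Proof. exact: (all_nthP 0 g_pos i (ltn_ord i)). Qed.

Definition is_labelling (f : {ffun L -> {set 'I_n}}) :=
  [forall i, #|f i| + nth 0 g i == d.+1] && injectiveb f && @inL n d [set f i | i : L].

Definition labellings := [set f | is_labelling f].

Definition type_stab := [set s : {perm L} | [forall i, nth 0 g (s i) == nth 0 g i]].

Lemma gtype_labelling f : is_labelling f -> gtype d [set f i | i : L] = g.
Proof.
case/andP=> /andP[/forallP size_f /injectiveP f_inj] _; rewrite /gtype.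
have -> : ([set f i | i : L] == set0) = false.
  by apply/negbTE/set0Pn; exists (f (Ordinal g_nil)); rewrite imset_f.
suff codims : perm_eq [seq d.+1 - #|X| | X : {set 'I_n} <- enum [set f i | i : L]] g.
  by rewrite /= (perm_sortP geq_total geq_trans geq_anti _ _ codims) (sorted_sort geq_trans).
have enum_im : perm_eq (enum [set f i | i : L]) [seq f i | i <- enum L].
  apply: uniq_perm; rewrite ?enum_uniq ?(map_inj_uniq f_inj) ?enum_uniq // => X.
  rewrite mem_enum; apply/imsetP/mapP => -[i _ ->]; exists i => //; exact: mem_enum.
apply: perm_trans (perm_map _ enum_im) _; rewrite -map_comp -[X in perm_eq _ X]map_nth_ord.
by rewrite (eq_map (g := fun i : L => nth 0 g i)) // => i /=; rewrite -(eqP (size_f i)) addKn.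
Qed.

Lemma labelling_of_type C : @inL n d C -> gtype d C = g ->
  exists2 f, is_labelling f & [set f i | i : L] = C.
Proof.
move=> C_L; rewrite /gtype; case: eqP => [_ g0|_ gC]; first by exfalso; move: g_pos; rewrite -g0.
set s := [seq d.+1 - #|X| | X : {set 'I_n} <- enum C] in gC.
have size_C X : X \in C -> #|X| <= d by case/andP: C_L => _ /forall_inP; apply.
have /(perm_iotaP 0)[Is Is_perm gE] : perm_eq g s by rewrite -gC perm_sort.
have size_Is : size Is = size g by rewrite gE size_map.
have size_s : size s = size (enum C) by rewrite size_map.
have Is_lt (i : L) : nth 0 Is i < size (enum C).
  have : nth 0 Is i \in Is by rewrite mem_nth ?size_Is.
  by rewrite (perm_mem Is_perm) mem_iota add0n size_s.
pose f := [ffun i : L => nth set0 (enum C) (nth 0 Is i)].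
have f_inj : injective f.
  move=> i j; rewrite !ffunE => /eqP; rewrite nth_uniq ?enum_uniq // => /eqP.
  move/eqP; rewrite nth_uniq ?size_Is ?(perm_uniq Is_perm) ?iota_uniq // => /eqP.
  exact: val_inj.
have im_f : [set f i | i : L] = C.
  apply/setP => X; apply/imsetP/idP => [[i _ ->]|XC]; first by rewrite ffunE -mem_enum mem_nth.
  have jC : index X (enum C) \in Is.
    by rewrite (perm_mem Is_perm) mem_iota add0n size_s index_mem mem_enum.
  have iI : index (index X (enum C)) Is < size g by rewrite -size_Is index_mem.
  by exists (Ordinal iI); rewrite // ffunE /= !nth_index // mem_enum.
exists f => //; rewrite /is_labelling im_f C_L andbT; apply/andP; split; last exact/injectiveP.
have nth_gE j : j < size g -> nth 0 g j = nth 0 s (nth 0 Is j).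
  by move=> jg; rewrite [in LHS]gE (nth_map 0) ?size_Is.
apply/forallP => i; rewrite ffunE nth_gE // (nth_map set0) // subnKC //.
by apply/leqW/size_C; rewrite -mem_enum mem_nth.
Qed.

Lemma card_labellings_with_image f0 : is_labelling f0 ->
  #|[set f in labellings | [set f i | i : L] == [set f0 i | i : L]]| = #|type_stab|.
Proof.
move=> f0_lab; case/andP: (f0_lab) => /andP[/forallP size_f0 /injectiveP f0_inj] f0_L.
pose relabel (s : {perm L}) := [ffun i => f0 (s i)].
have relabel_inj : injective relabel.
  by move=> s t /ffunP st; apply/permP => i; apply: f0_inj; have := st i; rewrite !ffunE.
rewrite -(card_imset _ relabel_inj); apply: eq_card => f; rewrite !inE.
apply/andP/imsetP => [[/andP[/andP[/forallP size_f /injectiveP f_inj] _] /eqP im_f]|].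
  have in_im i : exists j, f0 j == f i.
    have : f i \in [set f0 j | j : L] by rewrite -im_f imset_f.
    by case/imsetP=> j _ ->; exists j.
  pose s i := xchoose (in_im i).
  have sE i : f0 (s i) = f i by apply/eqP/(xchooseP (in_im i)).
  have s_inj : injective s by move=> i j sij; apply: f_inj; rewrite -!sE sij.
  exists (perm s_inj); last by apply/ffunP => i; rewrite ffunE permE sE.
  rewrite inE; apply/forallP => i; rewrite permE.
  by have := size_f0 (s i); rewrite sE -(eqP (size_f i)) eqn_add2l.
move=> [s /[!inE] /forallP s_g ->].
have im_s : [set relabel s i | i : L] = [set f0 i | i : L].
  apply/setP => X; apply/imsetP/imsetP => -[i _ ->].
    by exists (s i); rewrite ?ffunE.
  by exists ((s^-1)%g i); rewrite ?ffunE ?permKV.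
split; last by rewrite im_s.
rewrite /is_labelling im_s f0_L andbT; apply/andP; split.
  by apply/forallP => i; rewrite ffunE -(eqP (s_g i)).
by apply/injectiveP => i j; rewrite !ffunE => /f0_inj/perm_inj.
Qed.

Lemma lambda_mul_card_stab : lambda n d g * #|type_stab| = #|labellings|.
Proof.
pose image (f : {ffun L -> {set 'I_n}}) := [set f i | i : L].
rewrite -[#|labellings|]sum1_card.
rewrite (partition_big image (fun C => @inL n d C && (gtype d C == g))) /=; last first.
  by move=> f /[!inE] f_lab; rewrite gtype_labelling // eqxx andbT; case/andP: f_lab.
rewrite /lambda -sum_nat_const; apply: eq_big => C; first by rewrite inE.
rewrite inE => /andP[C_L /eqP gC]; have [f0 f0_lab <-] := labelling_of_type C_L gC.
by rewrite -(card_labellings_with_image f0_lab) -sum1_card; apply: eq_bigl => f; rewrite !inE.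
Qed.

(* The parts of [g] lie in [1, d+1], and an injective labelling has at most one
   empty member, so only the multiplicities [m_1, ..., m_d] contribute. *)
Lemma card_type_stab f : is_labelling f -> #|type_stab| = \prod_(1 <= k < d.+1) (mult k g)`!.
Proof.
case/andP=> /andP[/forallP size_f /injectiveP f_inj] _.
have g_le (i : L) : nth 0 g i < d.+2 by rewrite ltnS -(eqP (size_f i)) leq_addl.
pose c (i : L) : 'I_d.+2 := inord (nth 0 g i).
have -> : type_stab = [set s | colour_perm_on c setT s].
  apply/setP => s; have s_on : perm_on setT s by apply/subsetP => x; rewrite inE.
  rewrite !inE /colour_perm_on s_on; apply: eq_forallb => i.
  by rewrite -(inj_eq val_inj) /= !inordK.
rewrite card_colour_perm_on (eq_bigr (fun k : 'I_d.+2 => (mult k g)`!)) => [|k _]; last first.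
  rewrite /mult -card_nth_eq; congr _`!; apply: eq_card => i; rewrite !inE.
  by rewrite -(inj_eq val_inj) /= inordK.
have m0 : mult 0 g = 0.
  apply/eqP; rewrite -leqn0 leqNgt -has_count; apply/hasP => -[x xg /eqP x0].
  by move: (allP g_pos x xg); rewrite /= x0.
have m_top : mult d.+1 g <= 1.
  rewrite /mult -card_nth_eq; apply/card_le1_eqP => i j /[!inE] /eqP gi /eqP gj.
  have f0 (k : L) : nth 0 g k = d.+1 -> f k = set0.
    by move=> gk; apply/cards0_eq/(@addIn (nth 0 g k)); rewrite (eqP (size_f k)) gk.
  by apply: f_inj; rewrite f0 ?f0.
have fact_m_top : (mult d.+1 g)`! = 1 by case: (mult _ _) m_top => [|[]].
rewrite big_ord_recr big_ord_recl /= m0 fact_m_top.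
by rewrite muln1 mul1n big_add1 /= big_mkord; apply: eq_bigr.
Qed.

Lemma lambda_mul_prod_fact : lambda n d g * \prod_(1 <= k < d.+1) (mult k g)`! = #|labellings|.
Proof.
case: (pickP is_labelling) => [f f_lab|no_lab].
  by rewrite -(card_type_stab f_lab) lambda_mul_card_stab.
have lab0 : #|labellings| = 0 by apply: eq_card0 => f; rewrite inE no_lab.
have stab_gt0 : 0 < #|type_stab|.
  by apply/card_gt0P; exists 1%g; rewrite inE; apply/forallP => i; rewrite perm1.
have /eqP := lambda_mul_card_stab; rewrite lab0 muln_eq0 (negbTE (lt0n_neq0 stab_gt0)) orbF.
by move/eqP ->.
Qed.

Definition incidence (f : {ffun L -> {set 'I_n}}) : {ffun 'I_n -> {set L}} :=
  [ffun x => [set i | x \in f i]].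

Definition of_incidence (h : {ffun 'I_n -> {set L}}) : {ffun L -> {set 'I_n}} :=
  [ffun i => [set x | i \in h x]].

Lemma incidenceK : cancel incidence of_incidence.
Proof. by move=> f; apply/ffunP => i; apply/setP => x; rewrite !ffunE !inE ffunE inE. Qed.

Lemma of_incidenceK : cancel of_incidence incidence.
Proof. by move=> h; apply/ffunP => x; apply/setP => i; rewrite !ffunE !inE ffunE inE. Qed.

Definition nu_of (h : {ffun 'I_n -> {set L}}) (I : {set L}) := #|[set x | h x == I]|.

Lemma card_preim_nu_of (h : {ffun 'I_n -> {set L}}) (P : pred {set L}) :
  #|[set x | P (h x)]| = \sum_(I | P I) nu_of h I.
Proof.
rewrite -sum1_card (partition_big h P) => [|x]; last by rewrite inE.
apply: eq_bigr => I PI; rewrite /nu_of -sum1_card; apply: eq_bigl => x; rewrite !inE.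
by case: (h x =P I) => [->|]; rewrite ?PI ?andbF.
Qed.

Lemma Dd_imset (f : {ffun L -> {set 'I_n}}) (I : {set L}) : injective f ->
  (forall i, #|f i| + nth 0 g i = d.+1) ->
  Dd d (f @: I) = (d.+1%:Z - #|\bigcap_(i in I) f i|%:Z - (\sum_(i in I) nth 0 g i)%:Z)%R.
Proof.
move=> f_inj size_f; rewrite /Dd /codim /rho.
rewrite (big_imset (fun X : {set 'I_n} => X)) => [|i j _ _]; last exact: f_inj.
rewrite (big_imset (fun X : {set 'I_n} => (d.+1%:Z - #|X|%:Z)%R)) => [|i j _ _]; last exact: f_inj.
congr (_ - _)%R; rewrite -[RHS]natz natr_sum; apply: eq_bigr => i _.
by rewrite natz -(size_f i) PoszD addrC addKr.
Qed.

(* Conditions (1) and (2) of N(n,d;g) read on [f]: injectivity follows from (2)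
   for pairs, and [#|f i| <= d] from [0 < g_i]. *)
Lemma is_labellingE f : is_labelling f =
  [forall i, #|f i| + nth 0 g i == d.+1] &&
  [forall I : {set L}, (1 < #|I|) ==>
      (#|\bigcap_(i in I) f i| + \sum_(i in I) nth 0 g i < d.+1)].
Proof.
apply/idP/andP => [|[/forallP size_f /forall_inP cap_f]].
  case/andP=> /andP[/forallP size_f /injectiveP f_inj] /andP[/forallP D_pos _].
  split; first exact/forallP.
  apply/forall_inP => I I_gt1; have := implyP (D_pos (f @: I)).
  rewrite card_imset // I_gt1 imsetS ?subset_predT // => /(_ isT).
  by rewrite Dd_imset // ?gtz0_subn_addn // => i; apply/eqP.
have f_inj : injective f.
  move=> i j fij; apply/eqP; apply: contraT => nij.
  have := cap_f [set i; j]; rewrite cards2 nij !big_setU1 ?big_set1 ?inE //= => /(_ isT).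
  by rewrite -fij setIid addnA (eqP (size_f i)) ltnNge leq_addr.
rewrite /is_labelling (introT forallP size_f) (introT (injectiveP f) f_inj) /=.
apply/andP; split.
  apply/forall_inP => C' /andP[C'_sub C'_gt1].
  have C'E : C' = f @: (f @^-1: C').
    apply/setP => X; apply/idP/imsetP => [XC'|[i /[!inE] fi ->]//].
    by have /imsetP[i _ Xi] := subsetP C'_sub X XC'; exists i; rewrite // inE -Xi.
  move: C'_gt1; rewrite C'E card_imset // => C'_gt1.
  by rewrite Dd_imset ?gtz0_subn_addn; [exact: cap_f | | move=> i; apply/eqP].
apply/forall_inP => X /imsetP[i _ ->].
by rewrite -ltnS -(eqP (size_f i)) -[X in X < _]addn0 ltn_add2l nth_g_gt0.
Qed.

Lemma inN_incidence (h : {ffun 'I_n -> {set L}}) (nu : {set L} -> nat) :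
  nu =1 nu_of h -> @inN n d g nu = is_labelling (of_incidence h).
Proof.
move=> nuE; rewrite is_labellingE /inN.
have sum_in i : \sum_(I : {set L} | i \in I) nu I = #|of_incidence h i|.
  by rewrite ffunE (card_preim_nu_of h (fun I => i \in I)); apply: eq_bigr => I _.
have sum_sup (I : {set L}) :
    \sum_(I' : {set L} | I \subset I') nu I' = #|\bigcap_(i in I) of_incidence h i|.
  have -> : \bigcap_(i in I) of_incidence h i = [set x | I \subset h x].
    apply/setP => x; rewrite inE; apply/bigcapP/subsetP => [x_in i iI|x_in i iI].
      by have := x_in i iI; rewrite ffunE inE.
    by rewrite ffunE inE x_in.
  by rewrite (card_preim_nu_of h (fun I' => I \subset I')); apply: eq_bigr => I' _.
have sum_all : \sum_I nu I = n.
  rewrite (eq_bigr (nu_of h)) // -(card_preim_nu_of h predT).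
  by rewrite -[RHS]card_ord -cardsT; apply: eq_card => x; rewrite !inE.
rewrite sum_all eqxx andbT; congr andb.
  by apply: eq_forallb => i; rewrite sum_in eqz_subn_addn.
by apply: eq_forallb => I; rewrite sum_sup ltz_subn_addn.
Qed.

Definition nu_ord (h : {ffun 'I_n -> {set L}}) : {ffun {set L} -> 'I_n.+1} :=
  [ffun I => inord (nu_of h I)].

Lemma nu_ordE h I : val (nu_ord h I) = nu_of h I.
Proof. by rewrite ffunE /= inordK // ltnS -[X in _ <= X]card_ord max_card. Qed.

Lemma card_labellings_sum : #|labellings| =
  \sum_(nu : {ffun {set L} -> 'I_n.+1} | @inN n d g (fun I => val (nu I)))
     #|[set h | nu_ord h == nu]|.
Proof.
rewrite -(card_imset _ (can_inj incidenceK)).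
have -> : incidence @: labellings = [set h | is_labelling (of_incidence h)].
  apply/setP => h; rewrite inE; apply/imsetP/idP => [[f f_lab ->]|h_lab].
    by rewrite incidenceK -[is_labelling f]inE.
  by exists (of_incidence h); rewrite ?inE ?of_incidenceK.
rewrite -sum1_card (partition_big nu_ord (fun nu => @inN n d g (fun I => val (nu I)))) /=;
  last by move=> h; rewrite inE (inN_incidence (nu_ordE h)).
apply: eq_bigr => nu nu_N; rewrite -sum1_card; apply: eq_bigl => h; rewrite !inE.
by apply/andP/idP => [[]//|/eqP h_nu]; rewrite -(inN_incidence (nu_ordE h)) h_nu.
Qed.

Lemma card_nu_ord_fibre (nu : {ffun {set L} -> 'I_n.+1}) : \sum_I val (nu I) = n ->
  #|[set h | nu_ord h == nu]| * \prod_I (val (nu I))`! = n`!.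
Proof.
move=> sum_nu; rewrite -[n in RHS]card_ord -cardsT.
rewrite -(card_has_fibres set0 (nu := fun I => val (nu I))) ?cardsT ?card_ord //.
congr (_ * _); apply: eq_card => h; rewrite !inE /has_fibres.
apply/eqP/andP => [<-|[_ /forallP h_nu]].
  split; first by apply/forall_inP => x; rewrite !inE.
  by apply/forallP => I; rewrite nu_ordE; apply/eqP/eq_card => x; rewrite !inE.
apply/ffunP => I; apply: val_inj; rewrite nu_ordE -(eqP (h_nu I)).
by apply: eq_card => x; rewrite !inE.
Qed.

End Labellings.

Lemma prod_fact_neq0 (T : Type) (r : seq T) (P : pred T) (F : T -> nat) :
  (\prod_(t <- r | P t) ((F t)`!)%:R : rat) != 0%R.
Proof. by rewrite -natr_prod pnatr_eq0 -lt0n prodn_gt0 // => *; apply: fact_gt0. Qed.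

Lemma multinomial_sum_split (T : finType) (t0 : T) (F : T -> nat) :
  (((\sum_t F t)`!)%:R / \prod_t ((F t)`!)%:R : rat) =
  (((\sum_(t | t != t0) F t)`!)%:R / \prod_(t | t != t0) ((F t)`!)%:R
     * ('C(\sum_t F t, \sum_(t | t != t0) F t))%:R)%R.
Proof.
set s := \sum_(t | t != t0) F t.
have -> : \sum_t F t = F t0 + s by rewrite (bigD1 t0).
rewrite [X in (_ / X)%R](bigD1 t0) //= -[(F t0 + s)`!](bin_fact (leq_addl (F t0) s)).
rewrite addnK !natrM.
have a_fact : (((F t0)`!)%:R : rat) != 0%R by rewrite pnatr_eq0 -lt0n fact_gt0.
by field; rewrite a_fact prod_fact_neq0.
Qed.

Unset Implicit Arguments.

Theorem proposition4p7 (n d : nat) (g : seq nat) :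
  d < n -> 0 < size g -> all (fun x => 0 < x) g -> sorted geq g ->
  ((lambda n d g)%:R : rat)
    = ((\prod_(1 <= k < d.+1) ((mult k g)`!)%:R)^-1 *
       \sum_(nu : {ffun {set 'I_(size g)} -> 'I_n.+1}
              | @inN n d g (fun I => val (nu I)))
          ((n`!)%:R / (\prod_(I : {set 'I_(size g)}) ((val (nu I))`!)%:R)))%R
  /\ ((lambda n d g)%:R : rat)
    = ((\prod_(1 <= k < d.+1) ((mult k g)`!)%:R)^-1 *
       \sum_(nu : {ffun {set 'I_(size g)} -> 'I_n.+1}
              | @inN n d g (fun I => val (nu I)))
          (((\sum_(I : {set 'I_(size g)} | I != set0) val (nu I))`!)%:R
            / (\prod_(I : {set 'I_(size g)} | I != set0) ((val (nu I))`!)%:R)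
            * ('C(n, \sum_(I : {set 'I_(size g)} | I != set0) val (nu I)))%:R))%R.
Proof.
move=> _ g_nil g_pos g_sorted.
have sum_nu (nu : {ffun {set 'I_(size g)} -> 'I_n.+1}) :
    @inN n d g (fun I => val (nu I)) -> \sum_I val (nu I) = n.
  by case/andP=> _ /eqP.
have lambdaE : ((lambda n d g)%:R : rat) =
    ((\prod_(1 <= k < d.+1) ((mult k g)`!)%:R)^-1 * #|labellings n d g|%:R)%R.
  rewrite -(lambda_mul_prod_fact n d g_pos g_sorted g_nil) natrM natr_prod mulrC mulfK //.
  exact: prod_fact_neq0.
have labellingsE : (#|labellings n d g|%:R : rat) =
    (\sum_(nu : {ffun {set 'I_(size g)} -> 'I_n.+1} | @inN n d g (fun I => val (nu I)))
       ((n`!)%:R / (\prod_(I : {set 'I_(size g)}) ((val (nu I))`!)%:R)))%R.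
  rewrite (card_labellings_sum n d g_pos) natr_sum; apply: eq_bigr => nu /sum_nu nu_n.
  by rewrite -(card_nu_ord_fibre nu_n) natrM natr_prod mulfK ?prod_fact_neq0.
split; first by rewrite lambdaE labellingsE.
rewrite lambdaE labellingsE; congr (_ * _)%R; apply: eq_bigr => nu /sum_nu nu_n.
by have := multinomial_sum_split set0 (fun I => val (nu I)); rewrite nu_n.
Qed.
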